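(* Fix a binary subcarrier assignment and consider the optimization problem over $\{\tilde\gamma_k\}_{k=1}^K$, $\{\tilde M_{k,s}\}_{k\le K,s\le S}$, $\{T_k^{\rm com,ul}\}$, $\{T_k^{\rm com,dl}\}$: $$\min\ \frac I\eta\sum_{k=1}^K\frac{|\mathcal D_k|}{|\mathcal D|}(1-\tilde\gamma_k)+\frac{V\eta}{\sqrt{|\mathcal D|}}\sqrt{\sum_{k=1}^K\frac1{-\tilde\gamma_k^2+a_k}}$$ subject to, for all $k$ (and all $(k,s)$ where indicated): $T_k^{\rm com,dl}+\frac{C_k|\mathcal D_k|}{f_k}+T_k^{\rm com,ul}\le T_0$; $\sum_{s=1}^S\frac{\tilde M_{k,s}(2^{R^{\rm ul}_{k,s}/B}-1)\sigma^2Q}{|h^{\rm ul}_{k,s}|^2R^{\rm ul}_{k,s}}+C_k|\mathcal D_k|\Omega_kf_k^2+\xi_k\le E_{k,0}$; $\sum_{s=1}^S\tilde M_{k,s}\ge\tilde\gamma_kM$; $0\le\tilde\gamma_k<1$; $T_k^{\rm com,dl}\ge\tilde M_{k,s}Q/R^{\rm dl}_{k,s}$ for all $(k,s)$; $T_k^{\rm com,ul}\ge\tilde M_{k,s}Q/R^{\rm ul}_{k,s}$ for all $(k,s)$. This problem is convex (over the domain where the objective is defined, i.e. $\tilde\gamma_k^2<a_k$ for all $k$).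
   Context: All of the following are fixed positive constants: $I=U'(n_1+n_2)\mathcal H^2\mathcal G^4$, $\eta$, $V=\sqrt{6C/(\delta\lambda)}$, $|\mathcal D_k|$ and $|\mathcal D|=\sum_k|\mathcal D_k|$, $a_k=\frac{2\lambda+\Lambda_{k,\min}}{2\lambda}$ (with $\lambda>0$, $a_k>0$), $C_k$ (processor operations per sample), $f_k$ (processor frequency), $T_0$ (latency budget), $B$ (subcarrier bandwidth), $\sigma^2$ (noise power), $Q$ (bits per parameter), channel gains $h^{\rm ul}_{k,s}$, uplink and downlink rates $R^{\rm ul}_{k,s},R^{\rm dl}_{k,s}$, $\Omega_k$, $\xi_k$, energy budgets $E_{k,0}$, and $M=(n_1+n_2)r$. Here $\tilde\gamma_k=1-\gamma_k$ where $\gamma_k$ is device $k$'s dropout rate, and $\tilde M_{k,s}$ is the number of parameters device $k$ transmits on subcarrier $s$. *)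

From HB Require Import structures.
From mathcomp Require Import all_boot all_order all_algebra.
From mathcomp Require Import all_classical all_reals all_analysis.
Set Implicit Arguments. Unset Strict Implicit. Unset Printing Implicit Defensive.
Import Order.TTheory GRing.Theory Num.Theory.
Local Open Scope ring_scope.

Record point (R : realType) (K S : nat) := Point {
  gam : 'I_K -> R;
  Mt  : 'I_K -> 'I_S -> R;
  Tul : 'I_K -> R;
  Tdl : 'I_K -> R }.

Definition comb (R : realType) K S (t : R) (x y : point R K S) : point R K S :=
  Point (fun k => t * gam x k + (1 - t) * gam y k)
        (fun k s => t * Mt x k s + (1 - t) * Mt y k s)
        (fun k => t * Tul x k + (1 - t) * Tul y k)
        (fun k => t * Tdl x k + (1 - t) * Tdl y k).

Definition convex_pts (R : realType) K S (A : point R K S -> Prop) : Prop :=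
  forall x y t, A x -> A y -> 0 <= t <= 1 -> A (comb t x y).

Definition convex_fun_on (R : realType) K S (A : point R K S -> Prop)
  (f : point R K S -> R) : Prop :=
  forall x y t, A x -> A y -> 0 <= t <= 1 ->
    f (comb t x y) <= t * f x + (1 - t) * f y.

Definition a_coef (R : realType) K (lam : R) (Lmin : 'I_K -> R) (k : 'I_K) : R :=
  (2 * lam + Lmin k) / (2 * lam).

Definition Dtot (R : realType) K (Dk : 'I_K -> nat) : R := (\sum_(k < K) Dk k)%:R.

Definition dom (R : realType) K S (a : 'I_K -> R) (x : point R K S) : Prop :=
  forall k, gam x k ^+ 2 < a k.

Definition objective (R : realType) K S (I eta V : R) (Dk : 'I_K -> nat)
  (a : 'I_K -> R) (x : point R K S) : R :=
  I / eta * (\sum_(k < K) ((Dk k)%:R / Dtot R Dk) * (1 - gam x k))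
  + V * eta / Num.sqrt (Dtot R Dk)
    * Num.sqrt (\sum_(k < K) 1 / (- gam x k ^+ 2 + a k)).

(* Constraint functions, each constraint being  g x <= 0  (or  g x < 0). *)
Definition g_lat (R : realType) K S (C f : 'I_K -> R) (Dk : 'I_K -> nat) (T0 : R)
  (k : 'I_K) (x : point R K S) : R :=
  Tdl x k + C k * (Dk k)%:R / f k + Tul x k - T0.

Definition ecoef (R : realType) K S (B sigma2 Q : R) (h Rul : 'I_K -> 'I_S -> R)
  (k : 'I_K) (s : 'I_S) : R :=
  ((2 : R) `^ (Rul k s / B) - 1) * sigma2 * Q / (`|h k s| ^+ 2 * Rul k s).

Definition g_en (R : realType) K S (B sigma2 Q : R) (h Rul : 'I_K -> 'I_S -> R)
  (C f Om xi E0 : 'I_K -> R) (Dk : 'I_K -> nat) (k : 'I_K) (x : point R K S) : R :=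
  \sum_(s < S) Mt x k s * ecoef B sigma2 Q h Rul k s
  + C k * (Dk k)%:R * Om k * f k ^+ 2 + xi k - E0 k.

Definition g_cnt (R : realType) K S (M : R) (k : 'I_K) (x : point R K S) : R :=
  gam x k * M - \sum_(s < S) Mt x k s.

Definition g_lo (R : realType) K S (k : 'I_K) (x : point R K S) : R := - gam x k.
Definition g_hi (R : realType) K S (k : 'I_K) (x : point R K S) : R := gam x k - 1.

Definition g_dl (R : realType) K S (Q : R) (Rdl : 'I_K -> 'I_S -> R)
  (k : 'I_K) (s : 'I_S) (x : point R K S) : R := Mt x k s * Q / Rdl k s - Tdl x k.
Definition g_ul (R : realType) K S (Q : R) (Rul : 'I_K -> 'I_S -> R)
  (k : 'I_K) (s : 'I_S) (x : point R K S) : R := Mt x k s * Q / Rul k s - Tul x k.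

Definition feasible (R : realType) K S (a : 'I_K -> R) (C f Om xi E0 : 'I_K -> R)
  (Dk : 'I_K -> nat) (T0 B sigma2 Q M : R) (h Rul Rdl : 'I_K -> 'I_S -> R)
  (x : point R K S) : Prop :=
  dom a x /\
  forall k : 'I_K,
    g_lat C f Dk T0 k x <= 0 /\
    g_en B sigma2 Q h Rul C f Om xi E0 Dk k x <= 0 /\
    g_cnt M k x <= 0 /\
    g_lo k x <= 0 /\
    g_hi k x < 0 /\
    (forall s : 'I_S, g_dl Q Rdl k s x <= 0 /\ g_ul Q Rul k s x <= 0).

(* All constraint functions are affine in the variables, hence convex with convex
   sublevel sets, and the domain {gamma_k^2 < a_k} is convex because squaring is.
   The only nonlinear term of the objective is
   sqrt (sum_k 1 / (a_k - gamma_k^2)) = || (psi_k (gamma_k))_k ||_2  with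
   psi_k g = 1 / sqrt (a_k - g^2).  Each psi_k is positive and convex, as the
   decreasing convex map s |-> 1/s composed with the concave semicircle
   g |-> sqrt (a_k - g^2); the Euclidean norm is convex (Cauchy-Schwarz) and
   monotone on nonnegative vectors, so the composite is convex. *)

From Pilot Require Import Defs.
From mathcomp Require Import all_boot all_order all_algebra reals.
From mathcomp Require Import ring lra.
Set Implicit Arguments. Unset Strict Implicit. Unset Printing Implicit Defensive.
Import Order.TTheory GRing.Theory Num.Theory.
Local Open Scope ring_scope.

Lemma sumr_comb (R : pzRingType) (n : nat) (F G : 'I_n -> R) (t : R) :
  \sum_(i < n) (t * F i + (1 - t) * G i) =
  t * \sum_(i < n) F i + (1 - t) * \sum_(i < n) G i.
Proof. by rewrite big_split /= -!mulr_sumr. Qed.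

Section ConvexCombinations.
Variable R : realFieldType.
Implicit Types b p q t x y : R.

Lemma convex_comb_le b x y t : 0 <= t <= 1 -> x <= b -> y <= b ->
  t * x + (1 - t) * y <= b.
Proof. by move=> /andP[t0 t1] xb yb; nra. Qed.

Lemma convex_comb_lt b x y t : 0 <= t <= 1 -> x < b -> y < b ->
  t * x + (1 - t) * y < b.
Proof.
move=> /andP[t0 t1] xb yb.
have [->|t_neq0] := eqVneq t 0; first by rewrite mul0r add0r subr0 mul1r.
have t_gt0 : 0 < t by rewrite lt_neqAle eq_sym t_neq0.
have : 0 < t * (b - x) by rewrite mulr_gt0 // subr_gt0.
have : 0 <= (1 - t) * (b - y) by rewrite mulr_ge0 // subr_ge0 // ltW.
lra.
Qed.

Lemma sqr_convex x y t : 0 <= t <= 1 ->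
  (t * x + (1 - t) * y) ^+ 2 <= t * x ^+ 2 + (1 - t) * y ^+ 2.
Proof.
move=> /andP[t0 t1]; rewrite -subr_ge0.
have -> : t * x ^+ 2 + (1 - t) * y ^+ 2 - (t * x + (1 - t) * y) ^+ 2 =
          t * (1 - t) * (x - y) ^+ 2 by ring.
by rewrite mulr_ge0 ?sqr_ge0 ?mulr_ge0 ?subr_ge0.
Qed.

Lemma inv_convex p q t : 0 < p -> 0 < q -> 0 <= t <= 1 ->
  (t * p + (1 - t) * q)^-1 <= t * p^-1 + (1 - t) * q^-1.
Proof.
move=> p_gt0 q_gt0 /andP[t0 t1].
have s_gt0 : 0 < t * p + (1 - t) * q by nra.
rewrite -subr_ge0.
have -> : t * p^-1 + (1 - t) * q^-1 - (t * p + (1 - t) * q)^-1 =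
          t * (1 - t) * (p - q) ^+ 2 / (p * q * (t * p + (1 - t) * q)).
  by field; rewrite !lt0r_neq0.
apply: divr_ge0; first by rewrite mulr_ge0 ?sqr_ge0 // mulr_ge0 // subr_ge0.
by rewrite !mulr_ge0 // ltW.
Qed.

Lemma CauchySchwarz_sum (n : nat) (u v : 'I_n -> R) :
  (\sum_i u i * v i) ^+ 2 <= (\sum_i u i ^+ 2) * (\sum_i v i ^+ 2).
Proof.
have lagrange : \sum_i \sum_j (u i * v j - u j * v i) ^+ 2 =
    (\sum_i u i ^+ 2) * (\sum_j v j ^+ 2) + (\sum_i v i ^+ 2) * (\sum_j u j ^+ 2)
    - 2 * ((\sum_i u i * v i) * (\sum_j u j * v j)).
  have expand i j : (u i * v j - u j * v i) ^+ 2 =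
      u i ^+ 2 * v j ^+ 2 + v i ^+ 2 * u j ^+ 2 - 2 * (u i * v i * (u j * v j)).
    by ring.
  under eq_bigr => i _ do under eq_bigr => j _ do rewrite expand.
  under eq_bigr => i _ do rewrite sumrB big_split /=.
  rewrite sumrB big_split /= !big_distrlr /= mulr_sumr.
  by congr (_ + _ - _); apply: eq_bigr => i _; rewrite mulr_sumr.
have : 0 <= \sum_i \sum_j (u i * v j - u j * v i) ^+ 2.
  by apply: sumr_ge0 => i _; apply: sumr_ge0 => j _; apply: sqr_ge0.
rewrite lagrange; lra.
Qed.

End ConvexCombinations.

Section EuclideanNorm.
Variable R : rcfType.
Implicit Types a t x y : R.

Definition norm2 {n : nat} (u : 'I_n -> R) : R := Num.sqrt (\sum_i u i ^+ 2).

Lemma norm2_le (n : nat) (u v : 'I_n -> R) :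
  (forall i, 0 <= u i <= v i) -> norm2 u <= norm2 v.
Proof.
move=> uv; rewrite ler_sqrt; last by apply: sumr_ge0 => i _; apply: sqr_ge0.
apply: ler_sum => i _; have /andP[u0 uv_i] := uv i.
by rewrite ler_sqr // ?nnegrE // (le_trans u0).
Qed.

Lemma norm2_convex (n : nat) (u v : 'I_n -> R) t : 0 <= t <= 1 ->
  norm2 (fun i => t * u i + (1 - t) * v i) <= t * norm2 u + (1 - t) * norm2 v.
Proof.
move=> /andP[t0 t1].
have sqr_norm2 (w : 'I_n -> R) : norm2 w ^+ 2 = \sum_i w i ^+ 2.
  by rewrite sqr_sqrtr //; apply: sumr_ge0 => i _; apply: sqr_ge0.
have cs : \sum_i u i * v i <= norm2 u * norm2 v.
  rewrite -sqrtrM; last by apply: sumr_ge0 => i _; apply: sqr_ge0.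
  rewrite (le_trans (ler_norm _)) // -sqrtr_sqr ler_sqrt ?CauchySchwarz_sum //.
  by rewrite mulr_ge0 // sumr_ge0 // => i _; apply: sqr_ge0.
have expand : \sum_i (t * u i + (1 - t) * v i) ^+ 2 =
    t ^+ 2 * \sum_i u i ^+ 2 + (1 - t) ^+ 2 * \sum_i v i ^+ 2
    + 2 * t * (1 - t) * \sum_i u i * v i.
  by rewrite !mulr_sumr -!big_split; apply: eq_bigr => i _ /=; ring.
have rhs_ge0 : 0 <= t * norm2 u + (1 - t) * norm2 v.
  by rewrite addr_ge0 // mulr_ge0 ?sqrtr_ge0 ?subr_ge0.
rewrite -(ger0_norm rhs_ge0) -sqrtr_sqr ler_sqrt ?sqr_ge0 //.
rewrite expand -!sqr_norm2.
have : 0 <= t * (1 - t) by rewrite mulr_ge0 ?subr_ge0.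
nra.
Qed.

Lemma sqrt_sub_sqr_concave a x y t : x ^+ 2 <= a -> y ^+ 2 <= a -> 0 <= t <= 1 ->
  t * Num.sqrt (a - x ^+ 2) + (1 - t) * Num.sqrt (a - y ^+ 2) <=
  Num.sqrt (a - (t * x + (1 - t) * y) ^+ 2).
Proof.
move=> xa ya t01; have /andP[t0 t1] := t01.
set p := Num.sqrt (a - x ^+ 2); set q := Num.sqrt (a - y ^+ 2).
have p2 : p ^+ 2 = a - x ^+ 2 by rewrite sqr_sqrtr // subr_ge0.
have q2 : q ^+ 2 = a - y ^+ 2 by rewrite sqr_sqrtr // subr_ge0.
have ma : (t * x + (1 - t) * y) ^+ 2 <= a.
  exact: le_trans (sqr_convex x y t01) (convex_comb_le t01 xa ya).
have lhs_ge0 : 0 <= t * p + (1 - t) * q.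
  by rewrite addr_ge0 // mulr_ge0 ?sqrtr_ge0 ?subr_ge0.
(* The squares of both sides differ by [2 t (1 - t) (a - x y - p q)]. *)
rewrite -(ger0_norm lhs_ge0) -sqrtr_sqr ler_sqrt ?subr_ge0 //.
have pq_xy : p * q + x * y <= a.
  by have := sqr_ge0 (p - q); have := sqr_ge0 (x - y); rewrite !sqrrB p2 q2; lra.
have : 0 <= t * (1 - t) by rewrite mulr_ge0 ?subr_ge0.
have -> : (t * p + (1 - t) * q) ^+ 2 =
    t ^+ 2 * p ^+ 2 + (1 - t) ^+ 2 * q ^+ 2 + 2 * t * (1 - t) * (p * q) by ring.
rewrite p2 q2; nra.
Qed.

Lemma inv_sqrt_sub_sqr_convex a x y t : x ^+ 2 < a -> y ^+ 2 < a -> 0 <= t <= 1 ->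
  (Num.sqrt (a - (t * x + (1 - t) * y) ^+ 2))^-1 <=
  t * (Num.sqrt (a - x ^+ 2))^-1 + (1 - t) * (Num.sqrt (a - y ^+ 2))^-1.
Proof.
move=> xa ya t01; have /andP[t0 t1] := t01.
have sqrt_gt0 z : z ^+ 2 < a -> 0 < Num.sqrt (a - z ^+ 2) by rewrite sqrtr_gt0 subr_gt0.
have s_gt0 : 0 < t * Num.sqrt (a - x ^+ 2) + (1 - t) * Num.sqrt (a - y ^+ 2).
  have := sqrt_gt0 _ xa; have := sqrt_gt0 _ ya; nra.
have s_le := sqrt_sub_sqr_concave (ltW xa) (ltW ya) t01.
apply: le_trans (inv_convex (sqrt_gt0 _ xa) (sqrt_gt0 _ ya) t01).
by rewrite lef_pV2 ?posrE // (lt_le_trans s_gt0 s_le).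
Qed.

End EuclideanNorm.

Section ConvexProgram.
Variables (R : realType) (K S : nat).
Local Notation pt := (Defs.point R K S).
Implicit Types (A : pt -> Prop) (f g : pt -> R) (t : R).

Definition affine_pts f : Prop :=
  forall x y t, f (comb t x y) = t * f x + (1 - t) * f y.

Lemma affine_convex_fun_on A f : affine_pts f -> convex_fun_on A f.
Proof. by move=> f_aff x y t _ _ _; rewrite f_aff. Qed.

Lemma convex_fun_onD A f g :
  convex_fun_on A f -> convex_fun_on A g -> convex_fun_on A (f \+ g).
Proof.
move=> f_cvx g_cvx x y t Ax Ay t01 /=.
by have := f_cvx x y t Ax Ay t01; have := g_cvx x y t Ax Ay t01; lra.
Qed.

Lemma convex_fun_onZ A c f :
  0 <= c -> convex_fun_on A f -> convex_fun_on A (fun x => c * f x).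
Proof.
move=> c_ge0 f_cvx x y t Ax Ay t01.
have -> : t * (c * f x) + (1 - t) * (c * f y) = c * (t * f x + (1 - t) * f y) by ring.
exact: ler_wpM2l (f_cvx x y t Ax Ay t01).
Qed.

Lemma affine_pts_le g b x y t : affine_pts g -> 0 <= t <= 1 ->
  g x <= b -> g y <= b -> g (comb t x y) <= b.
Proof. by move=> g_aff t01 gx gy; rewrite g_aff convex_comb_le. Qed.

Lemma affine_pts_lt g b x y t : affine_pts g -> 0 <= t <= 1 ->
  g x < b -> g y < b -> g (comb t x y) < b.
Proof. by move=> g_aff t01 gx gy; rewrite g_aff convex_comb_lt. Qed.

Lemma convex_dom (a : 'I_K -> R) : convex_pts (@dom R K S a).
Proof.
move=> x y t xa ya t01 k.
exact: le_lt_trans (sqr_convex _ _ t01) (convex_comb_lt t01 (xa k) (ya k)).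
Qed.

Lemma sqrt_sum_inv_convex (a : 'I_K -> R) :
  convex_fun_on (@dom R K S a) (fun x => Num.sqrt (\sum_k 1 / (- gam x k ^+ 2 + a k))).
Proof.
pose psi (x : pt) k := (Num.sqrt (a k - gam x k ^+ 2))^-1.
have norm2_psi (x : pt) : dom a x ->
    Num.sqrt (\sum_k 1 / (- gam x k ^+ 2 + a k)) = norm2 (psi x).
  move=> xa; congr Num.sqrt; apply: eq_bigr => k _.
  by rewrite /psi exprVn sqr_sqrtr ?subr_ge0 ?ltW // div1r addrC.
move=> x y t xa ya t01; rewrite !norm2_psi //; last exact: convex_dom.
apply: le_trans (norm2_convex _ _ t01); apply: norm2_le => k.
by rewrite invr_ge0 sqrtr_ge0 /= inv_sqrt_sub_sqr_convex.
Qed.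

Lemma convex_objective (I eta V : R) (Dk : 'I_K -> nat) (a : 'I_K -> R) :
  0 < eta -> 0 < V -> convex_fun_on (@dom R K S a) (objective I eta V Dk a).
Proof.
move=> eta_gt0 V_gt0; apply: convex_fun_onD.
  apply: affine_convex_fun_on => x y t /=.
  rewrite (_ : \sum_k _ = t * \sum_k (Dk k)%:R / Dtot R Dk * (1 - gam x k)
                        + (1 - t) * \sum_k (Dk k)%:R / Dtot R Dk * (1 - gam y k)).
    by ring.
  by rewrite -sumr_comb; apply: eq_bigr => k _; ring.
apply: convex_fun_onZ; last exact: sqrt_sum_inv_convex.
by rewrite divr_ge0 ?sqrtr_ge0 // mulr_ge0 // ltW.
Qed.

Section Constraints.
Variables (C f Om xi E0 : 'I_K -> R) (Dk : 'I_K -> nat) (T0 B sigma2 Q M : R).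
Variables (h Rul Rdl : 'I_K -> 'I_S -> R) (k : 'I_K).

Lemma g_lat_affine : affine_pts (g_lat C f Dk T0 k).
Proof. by move=> x y t; rewrite /g_lat /=; ring. Qed.

Lemma g_en_affine : affine_pts (g_en B sigma2 Q h Rul C f Om xi E0 Dk k).
Proof.
move=> x y t; rewrite /g_en /=.
under eq_bigr do rewrite mulrDl -!mulrA.
by rewrite sumr_comb; ring.
Qed.

Lemma g_cnt_affine : affine_pts (g_cnt M k).
Proof. by move=> x y t; rewrite /g_cnt /= sumr_comb; ring. Qed.

Lemma g_lo_affine : affine_pts (g_lo k).
Proof. by move=> x y t; rewrite /g_lo /=; ring. Qed.

Lemma g_hi_affine : affine_pts (g_hi k).
Proof. by move=> x y t; rewrite /g_hi /=; ring. Qed.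

Lemma g_dl_affine s : affine_pts (g_dl Q Rdl k s).
Proof. by move=> x y t; rewrite /g_dl /=; ring. Qed.

Lemma g_ul_affine s : affine_pts (g_ul Q Rul k s).
Proof. by move=> x y t; rewrite /g_ul /=; ring. Qed.

End Constraints.

Lemma convex_feasible (a : 'I_K -> R) (C f Om xi E0 : 'I_K -> R) (Dk : 'I_K -> nat)
    (T0 B sigma2 Q M : R) (h Rul Rdl : 'I_K -> 'I_S -> R) :
  convex_pts (feasible a C f Om xi E0 Dk T0 B sigma2 Q M h Rul Rdl).
Proof.
move=> x y t [xa xf] [ya yf] t01; split; first exact: convex_dom.
move=> k; have [lat_x [en_x [cnt_x [lo_x [hi_x tr_x]]]]] := xf k.
have [lat_y [en_y [cnt_y [lo_y [hi_y tr_y]]]]] := yf k.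
split; first by apply: (affine_pts_le _ t01 lat_x lat_y); apply: g_lat_affine.
split; first by apply: (affine_pts_le _ t01 en_x en_y); apply: g_en_affine.
split; first by apply: (affine_pts_le _ t01 cnt_x cnt_y); apply: g_cnt_affine.
split; first by apply: (affine_pts_le _ t01 lo_x lo_y); apply: g_lo_affine.
split; first by apply: (affine_pts_lt _ t01 hi_x hi_y); apply: g_hi_affine.
move=> s; have [dl_x ul_x] := tr_x s; have [dl_y ul_y] := tr_y s.
split; first by apply: (affine_pts_le _ t01 dl_x dl_y); apply: g_dl_affine.
by apply: (affine_pts_le _ t01 ul_x ul_y); apply: g_ul_affine.
Qed.

End ConvexProgram.

Theorem lemma4 (R : realType) (K S : nat)
  (I eta V lam T0 B sigma2 Q M : R)
  (Lmin C f Om xi E0 : 'I_K -> R) (Dk : 'I_K -> nat)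
  (h Rul Rdl : 'I_K -> 'I_S -> R)
  (hI : 0 < I) (heta : 0 < eta) (hV : 0 < V) (hlam : 0 < lam)
  (ha : forall k, 0 < a_coef lam Lmin k)
  (hT0 : 0 < T0) (hB : 0 < B) (hsig : 0 < sigma2) (hQ : 0 < Q) (hM : 0 < M)
  (hD : forall k, (0 < Dk k)%N) (hC : forall k, 0 < C k) (hf : forall k, 0 < f k)
  (hOm : forall k, 0 < Om k) (hxi : forall k, 0 < xi k) (hE0 : forall k, 0 < E0 k)
  (hh : forall k s, 0 < h k s) (hRul : forall k s, 0 < Rul k s)
  (hRdl : forall k s, 0 < Rdl k s) :
  let a := a_coef lam Lmin in
  let D := @dom R K S a in
  convex_pts D /\
      convex_fun_on D (objective I eta V Dk a) /\
      (forall k, convex_fun_on D (g_lat C f Dk T0 k)) /\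
      (forall k, convex_fun_on D (g_en B sigma2 Q h Rul C f Om xi E0 Dk k)) /\
      (forall k, convex_fun_on D (g_cnt M k)) /\
      (forall k, convex_fun_on D (g_lo k) /\ convex_fun_on D (g_hi k)) /\
      (forall k s, convex_fun_on D (g_dl Q Rdl k s) /\ convex_fun_on D (g_ul Q Rul k s)) /\
      convex_pts (feasible a C f Om xi E0 Dk T0 B sigma2 Q M h Rul Rdl).
Proof.
move=> a D.
split; first exact: convex_dom.
split; first exact: convex_objective.
split; first by move=> k; apply/affine_convex_fun_on/g_lat_affine.
split; first by move=> k; apply/affine_convex_fun_on/g_en_affine.
split; first by move=> k; apply/affine_convex_fun_on/g_cnt_affine.
split.
  by move=> k; split; apply/affine_convex_fun_on; [exact: g_lo_affine | exact: g_hi_affine].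
split.
  by move=> k s; split; apply/affine_convex_fun_on; [exact: g_dl_affine | exact: g_ul_affine].
exact: convex_feasible.
Qed.
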